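(* Let $n\geq 0$, let $\{b^n_j\}_{j=0}^n$ be a basis of the space of real univariate polynomials of degree at most $n$, and let $\mathbf{x}\in\mathbb{R}^{n+1}$ with $\mathbf{x}_0<\dots<\mathbf{x}_n$. Let $v$ and $w$ be polynomials of degree $n+1$ such that $v(\mathbf{x}_i)=0$, $v'(\mathbf{x}_i)\neq 0$ and $w(\mathbf{x}_i)\neq 0$ for each $0\le i\le n$. Then $V^n(\mathbf{x})$ is invertible and $$(V^n(\mathbf{x}))^{-1}=\mathrm{Bez}(v,w)\,(V^n(\mathbf{x}))^T\,\mathrm{diag}\!\left(\frac{1}{v'(\mathbf{x}_j)w(\mathbf{x}_j)}\right)_{j=0}^n.$$
   Context: The Vandermonde matrix $V^n(\mathbf{x})$ is the $(n+1)\times(n+1)$ matrix with entries $V^n_{ij}(\mathbf{x})=b^n_j(\mathbf{x}_i)$. For polynomials $v,w$ of degree at most $n+1$, the Bézout matrix $\mathrm{Bez}(v,w)$ is the unique $(n+1)\times(n+1)$ matrix satisfying $$\frac{v(s)w(t)-v(t)w(s)}{s-t}=\sum_{i,j=0}^n \mathrm{Bez}_{ij}(v,w)\,b^n_i(s)\,b^n_j(t).$$ *)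

From mathcomp Require Import all_boot all_order all_algebra.
From mathcomp Require Import reals.
Set Implicit Arguments. Unset Strict Implicit. Unset Printing Implicit Defensive.
Import Order.TTheory GRing.Theory Num.Theory.
Local Open Scope ring_scope.

Definition is_poly_basis (R : realType) (n : nat) (b : 'I_n.+1 -> {poly R}) : Prop :=
  (forall j, size (b j) <= n.+1)%N /\
  (forall p : {poly R}, (size p <= n.+1)%N ->
     exists c : 'I_n.+1 -> R,
       p = \sum_j c j *: b j /\
       forall c' : 'I_n.+1 -> R, p = \sum_j c' j *: b j -> forall j, c' j = c j).

Definition vandermonde (R : realType) (n : nat) (b : 'I_n.+1 -> {poly R})
  (x : 'I_n.+1 -> R) : 'M[R]_n.+1 :=
  \matrix_(i, j) (b j).[x i].

(* B is the Bezout matrix Bez(v,w) w.r.t. the basis b: the identity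
   (v(s)w(t)-v(t)w(s))/(s-t) = sum_{i,j} B_ij b_i(s) b_j(t)
   holds (as an identity of rational functions, i.e. for all s <> t). *)
Definition is_bezout (R : realType) (n : nat) (b : 'I_n.+1 -> {poly R})
  (v w : {poly R}) (B : 'M[R]_n.+1) : Prop :=
  forall s t : R, s != t ->
    (v.[s] * w.[t] - v.[t] * w.[s]) / (s - t)
    = \sum_i \sum_j B i j * (b i).[s] * (b j).[t].

From mathcomp Require Import all_boot all_order all_algebra.
From mathcomp Require Import reals.
From mathcomp Require Import ring.
Set Implicit Arguments. Unset Strict Implicit. Unset Printing Implicit Defensive.
Import Order.TTheory GRing.Theory Num.Theory.
Local Open Scope ring_scope.

(* 1. Polynomial rigidity: a polynomial with more distinct roots than its
      degree vanishes; in characteristic 0 so does a polynomial vanishing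
      everywhere except at one point.
   2. Invertibility: a vector c in the kernel of V^T gives the polynomial
      \sum_j c_j b_j of degree <= n vanishing at the n+1 distinct nodes,
      hence zero, hence c = 0 because b is a basis.
   3. The Bezout form: for fixed t, the polynomial
      P_t(s) = \sum_{i,j} B_ij b_i(s) b_j(t) satisfies
      P_t (X - t) = w(t) v - v(t) w, so that differentiating at t gives
      P_t(t) = v'(t) w(t) - v(t) w'(t).
   4. Since (V B V^T)_ik = P_{x_k}(x_i), step 3 shows that V B V^T is the
      diagonal matrix of the v'(x_k) w(x_k) when the x_k are roots of v:
      off the diagonal the Bezout identity gives 0 directly.  Hence
      V (B V^T diag(1 / (v' w))) = 1, which is the theorem. *)

Section PolyRigidity.
Variable R : numDomainType.

Lemma poly_eq0_roots (p : {poly R}) (rs : seq R) :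
  uniq rs -> all (root p) rs -> (size p <= size rs)%N -> p = 0.
Proof.
move=> rs_uniq rs_roots p_small; apply/eqP/negPn/negP => p_neq0.
by have := max_poly_roots p_neq0 rs_roots rs_uniq; rewrite ltnNge p_small.
Qed.

(* A polynomial vanishing everywhere except possibly at t is 0: it has the
   infinitely many roots t + 1, t + 2, ... (characteristic 0). *)
Lemma poly_eq0_except (p : {poly R}) (t : R) :
  (forall s, s != t -> p.[s] = 0) -> p = 0.
Proof.
move=> p_vanish.
apply: (@poly_eq0_roots _ [seq t + k.+1%:R | k <- iota 0 (size p)]).
- rewrite map_inj_uniq ?iota_uniq // => k l /addrI /eqP.
  by rewrite eqr_nat => /eqP [].
- apply/allP => s /mapP [k _ ->]; apply/rootP/p_vanish.
  by rewrite -subr_eq0 addrAC subrr add0r pnatr_eq0.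
- by rewrite size_map size_iota.
Qed.

End PolyRigidity.

Lemma increasing_injective (R : realDomainType) (m : nat) (x : 'I_m -> R) :
  (forall i j : 'I_m, (i < j)%N -> x i < x j) -> injective x.
Proof.
move=> x_incr i j xij.
by case: (ltngtP i j) => [/x_incr|/x_incr|/val_inj //]; rewrite xij ltxx.
Qed.

Section VandermondeInvertible.
Variables (R : realType) (n : nat) (b : 'I_n.+1 -> {poly R}).
Hypothesis b_basis : is_poly_basis b.

Lemma size_basis_comb (c : 'I_n.+1 -> R) :
  (size (\sum_j c j *: b j)%R <= n.+1)%N.
Proof.
apply: (big_ind (fun q : {poly R} => (size q <= n.+1)%N)) => [|p q sp sq|j _].
- by rewrite size_poly0.
- by rewrite (leq_trans (size_polyD _ _)) // geq_max sp sq.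
- exact: leq_trans (size_scale_leq _ _) (b_basis.1 j).
Qed.

Lemma basis_comb_eq0 (c : 'I_n.+1 -> R) :
  \sum_j c j *: b j = 0 -> forall j, c j = 0.
Proof.
move=> c_comb0 j.
have size0 : (size (0 : {poly R})%R <= n.+1)%N by rewrite size_poly0.
have [d [_ d_unique]] := b_basis.2 0%R size0.
rewrite (d_unique c (esym c_comb0)) -(d_unique (fun=> 0)) //.
by rewrite big1 // => k _; rewrite scale0r.
Qed.

Lemma vandermonde_unit (x : 'I_n.+1 -> R) :
  injective x -> vandermonde b x \in unitmx.
Proof.
move=> x_inj; rewrite -unitmx_tr -row_free_unit -kermx_eq0.
set K := kermx _; have KV0 : K *m (vandermonde b x)^T = 0 := mulmx_ker _.
apply/eqP/matrixP => k j; rewrite [RHS]mxE; apply: basis_comb_eq0 j.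
apply: (@poly_eq0_roots _ _ [seq x i | i <- enum 'I_n.+1]).
- by rewrite map_inj_uniq ?enum_uniq.
- apply/allP => _ /mapP [i _ ->]; apply/rootP.
  have := congr1 (fun M : 'M[R]_n.+1 => M k i) KV0; rewrite !mxE => <-.
  by rewrite horner_sum; apply: eq_bigr => l _; rewrite hornerZ !mxE.
- by rewrite size_map size_enum_ord size_basis_comb.
Qed.

End VandermondeInvertible.

Section BezoutForm.
Variables (R : realType) (n : nat) (b : 'I_n.+1 -> {poly R}).
Variables (v w : {poly R}) (B : 'M[R]_n.+1).
Hypothesis B_bezout : is_bezout b v w B.

Definition bezout_poly (t : R) : {poly R} :=
  \sum_i \sum_j (B i j * (b j).[t]) *: b i.

Lemma horner_bezout_poly (s t : R) :
  (bezout_poly t).[s] = \sum_i \sum_j B i j * (b i).[s] * (b j).[t].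
Proof.
rewrite horner_sum; apply: eq_bigr => i _.
by rewrite horner_sum; apply: eq_bigr => j _; rewrite hornerZ; ring.
Qed.

(* The Bezout identity with t frozen, cleared of its denominator. *)
Lemma bezout_poly_mulXsubC (t : R) :
  bezout_poly t * ('X - t%:P) = w.[t] *: v - v.[t] *: w.
Proof.
apply/eqP; rewrite -subr_eq0; apply/eqP/(@poly_eq0_except _ _ t) => s s_neq_t.
rewrite !hornerE horner_bezout_poly -B_bezout // divfK ?subr_eq0 //; ring.
Qed.

(* Differentiating the previous identity at t evaluates the form on the
   diagonal: B(t, t) = v'(t) w(t) - v(t) w'(t). *)
Lemma bezout_poly_diag (t : R) :
  (bezout_poly t).[t] = (v^`()).[t] * w.[t] - v.[t] * (w^`()).[t].
Proof.
have := congr1 (fun p => (p^`()).[t]) (bezout_poly_mulXsubC t).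
rewrite derivB derivM derivXsubC !derivZ /=.
by rewrite !hornerE subrr mulr0 add0r => ->; ring.
Qed.

Lemma vandermonde_bezout_entry (x : 'I_n.+1 -> R) (i k : 'I_n.+1) :
  (vandermonde b x *m B *m (vandermonde b x)^T) i k = (bezout_poly (x k)).[x i].
Proof.
rewrite horner_bezout_poly !mxE exchange_big; apply: eq_bigr => l _.
rewrite !mxE big_distrl; apply: eq_bigr => j _; rewrite !mxE /=; ring.
Qed.

Lemma vandermonde_bezout_diag (x : 'I_n.+1 -> R) :
  injective x -> (forall i, v.[x i] = 0) ->
  vandermonde b x *m B *m (vandermonde b x)^T
  = diag_mx (\row_k ((v^`()).[x k] * w.[x k])).
Proof.
move=> x_inj v_roots; apply/matrixP => i k.
rewrite vandermonde_bezout_entry !mxE horner_bezout_poly.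
have [<-|i_neq_k] := eqVneq i k.
  by rewrite -horner_bezout_poly bezout_poly_diag v_roots mul0r subr0 mulr1n.
have xi_neq_xk : x i != x k by apply: contra i_neq_k => /eqP /x_inj ->.
by rewrite -B_bezout // !v_roots !mul0r subrr mul0r mulr0n.
Qed.

End BezoutForm.

Theorem theorem2p1 (R : realType) (n : nat) (b : 'I_n.+1 -> {poly R})
  (x : 'I_n.+1 -> R) (v w : {poly R}) :
  is_poly_basis b ->
  (forall i j : 'I_n.+1, (i < j)%N -> x i < x j) ->
  size v = n.+2 -> size w = n.+2 ->
  (forall i, v.[x i] = 0) ->
  (forall i, (v^`()).[x i] != 0) ->
  (forall i, w.[x i] != 0) ->
  vandermonde b x \in unitmx /\
  forall B : 'M[R]_n.+1, is_bezout b v w B ->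
    invmx (vandermonde b x)
    = B *m (vandermonde b x)^T
        *m diag_mx (\row_j (1 / ((v^`()).[x j] * w.[x j]))).
Proof.
move=> b_basis x_incr _ _ v_roots v'_neq0 w_neq0.
have x_inj := increasing_injective x_incr.
have V_unit := vandermonde_unit b_basis x_inj.
split=> // B B_bezout; set V := vandermonde b x.
suff V_right_inv : V *m (B *m V^T *m diag_mx (\row_j (1 / ((v^`()).[x j] * w.[x j]))))
    = 1%:M by rewrite -[RHS](mulKmx V_unit) V_right_inv mulmx1.
rewrite !mulmxA (vandermonde_bezout_diag B_bezout x_inj v_roots) mulmx_diag.
apply/matrixP => i k; rewrite !mxE.
by rewrite div1r mulfV ?mulf_neq0.
Qed.
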